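(* Let $m,n,n_i,r$ be positive integers with $n_i\le n$, $\rho>0$, $\lambda>0$, $M_i\in\mathbb R^{m\times n_i}$. For $U\in\mathbb R^{m\times r}$, $V\in\mathbb R^{n_i\times r}$, $S\in\mathbb R^{m\times n_i}$ let $$\mathcal L_i(U,V,S)=\frac12\|UV^T+S-M_i\|_F^2+\frac{\rho}{2}\Big(\|V\|_F^2+\frac{n_i}{n}\|U\|_F^2\Big)+\lambda\|S\|_1,$$ and $g_i(U)=\inf_{V,S}\mathcal L_i(U,V,S)$. Assume the standing boundedness assumption described in the context. Then $g_i$ is differentiable and, for every $U$, $$\nabla_U g_i(U)=\nabla_U\mathcal L_i(U,V_i^*,S_i^* ),$$ where $(V_i^*,S_i^* )=\arg\min_{V,S}\mathcal L_i(U,V,S)$ is the (unique) minimizer for this $U$.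
   Context: $\|S\|_1=\sum_{jk}|S_{jk}|$. Standing assumption (bounded variables): there are constants $C_U,C_V,C_S,C_M$ such that all matrices considered satisfy $\|U\|_F\le C_U$, $\|V\|_F\le C_V$, $\|S\|_F\le C_S$, $\|M_i\|_F\le C_M$ (in particular the minimizers $V_i^*,S_i^*$ obey these bounds). *)

From HB Require Import structures.
From mathcomp Require Import all_boot all_order all_algebra.
From mathcomp Require Import all_classical all_reals all_analysis.
Set Implicit Arguments. Unset Strict Implicit. Unset Printing Implicit Defensive.
Import Order.TTheory GRing.Theory Num.Theory.
Import numFieldNormedType.Exports.
Local Open Scope ring_scope.
Local Open Scope classical_set_scope.

Definition frob {R : realType} {p q : nat} (A : 'M[R]_(p, q)) : R :=
  Num.sqrt (\sum_(i < p) \sum_(j < q) A i j ^+ 2).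

Definition l1norm {R : realType} {p q : nat} (A : 'M[R]_(p, q)) : R :=
  \sum_(i < p) \sum_(j < q) `|A i j|.

Definition frob_inner {R : realType} {p q : nat} (G H : 'M[R]_(p, q)) : R :=
  \sum_(i < p) \sum_(j < q) G i j * H i j.

Definition Lobj {R : realType} {m n ni r : nat} (rho lam : R) (M : 'M[R]_(m, ni))
  (U : 'M[R]_(m, r)) (V : 'M[R]_(ni, r)) (S : 'M[R]_(m, ni)) : R :=
  2^-1 * frob (U *m V^T + S - M) ^+ 2
  + rho / 2 * (frob V ^+ 2 + ni%:R / n%:R * frob U ^+ 2)
  + lam * l1norm S.

Definition gfun {R : realType} {m n ni r : nat} (rho lam : R) (M : 'M[R]_(m, ni))
  (U : 'M[R]_(m, r)) : R :=
  inf (range (fun VS : 'M[R]_(ni, r) * 'M[R]_(m, ni) =>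
         @Lobj R m n ni r rho lam M U VS.1 VS.2)).

Definition is_minimizer {R : realType} {m n ni r : nat} (rho lam : R) (M : 'M[R]_(m, ni))
  (U : 'M[R]_(m, r)) (V : 'M[R]_(ni, r)) (S : 'M[R]_(m, ni)) : Prop :=
  forall V' S', @Lobj R m n ni r rho lam M U V S <= @Lobj R m n ni r rho lam M U V' S'.

Definition is_gradient {R : realType} {p q : nat} (f : 'M[R]_(p, q) -> R)
  (U G : 'M[R]_(p, q)) : Prop :=
  differentiable f U /\ forall H, 'd f U H = frob_inner G H.

(* For fixed U the objective L U is coercive and strongly convex in (V, S) (the
   ridge term takes care of V and, once V is fixed, the residual term of S), so
   it has a unique minimiser (Vs, Ss).  Expanding in U,
     L (U + H) V S = L U V S + <gradU U V S, H> + |H V^T|^2 / 2 + rho n_i / (2 n) |H|^2,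
   so gradU is the partial gradient of L with a nonnegative quadratic remainder,
   and g (U + H) <= L (U + H) Vs Ss bounds g from above.  From below, if
   (V', S') minimises L (U + H), then g (U + H) >= L U V' S' + <gradU U V' S', H>;
   the quadratic growth of L U around (Vs, Ss) absorbs the difference of the two
   gradients by Young's inequality, provided V' stays bounded for |H| <= 1. *)

From HB Require Import structures.
From mathcomp Require Import all_boot all_order all_algebra.
From mathcomp Require Import all_classical all_reals all_analysis.
From mathcomp Require Import ring lra.
Import Order.TTheory GRing.Theory Num.Theory.
Import numFieldNormedType.Exports.
Local Open Scope ring_scope.
Set Implicit Arguments. Unset Strict Implicit. Unset Printing Implicit Defensive.

Section FrobeniusInner.
Variable R : realType.
Implicit Types (p q s : nat).

Definition sqfrob p q (A : 'M[R]_(p, q)) : R := frob_inner A A.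

Lemma frob_innerC p q (A B : 'M[R]_(p, q)) : frob_inner A B = frob_inner B A.
Proof. by apply: eq_bigr => i _; apply: eq_bigr => j _; rewrite mulrC. Qed.

Lemma frob_inner_is_linear p q (A : 'M[R]_(p, q)) : linear (frob_inner A).
Proof.
move=> a B C; rewrite /frob_inner scaler_sumr -big_split; apply: eq_bigr => i _.
by rewrite scaler_sumr -big_split; apply: eq_bigr => j _; rewrite !mxE mulrDr mulrCA.
Qed.

HB.instance Definition _ p q (A : 'M[R]_(p, q)) :=
  GRing.isLinear.Build R _ _ _ (frob_inner A) (frob_inner_is_linear A).

Lemma frob_innerDl p q (A B C : 'M[R]_(p, q)) :
  frob_inner (A + B) C = frob_inner A C + frob_inner B C.
Proof. by rewrite frob_innerC linearD /= !(frob_innerC C). Qed.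

Lemma frob_innerBl p q (A B C : 'M[R]_(p, q)) :
  frob_inner (A - B) C = frob_inner A C - frob_inner B C.
Proof. by rewrite frob_innerC linearB /= !(frob_innerC C). Qed.

Lemma frob_innerZl p q a (A C : 'M[R]_(p, q)) :
  frob_inner (a *: A) C = a * frob_inner A C.
Proof. by rewrite frob_innerC linearZ /= frob_innerC. Qed.

Lemma frob_inner_trmx p q (A B : 'M[R]_(p, q)) : frob_inner A^T B^T = frob_inner A B.
Proof.
by rewrite /frob_inner exchange_big; apply: eq_bigr => i _; apply: eq_bigr => j _; rewrite !mxE.
Qed.

Lemma frob_inner_mulmxr p q s (A : 'M[R]_(p, q)) (B : 'M[R]_(q, s)) C :
  frob_inner (A *m B) C = frob_inner A (C *m B^T).
Proof.
rewrite /frob_inner; apply: eq_bigr => i _.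
under eq_bigr do rewrite mxE mulr_suml.
rewrite exchange_big; apply: eq_bigr => k _; rewrite mxE mulr_sumr.
by apply: eq_bigr => j _; rewrite !mxE -mulrA [C _ _ * _]mulrC.
Qed.

Lemma frob_inner_mulmxl p q s (A : 'M[R]_(p, q)) (B : 'M[R]_(q, s)) C :
  frob_inner (A *m B) C = frob_inner B (A^T *m C).
Proof.
by rewrite -frob_inner_trmx trmx_mul frob_inner_mulmxr trmxK -[RHS]frob_inner_trmx trmx_mul trmxK.
Qed.

Lemma sqfrob_ge0 p q (A : 'M[R]_(p, q)) : 0 <= sqfrob A.
Proof. by apply: sumr_ge0 => i _; apply: sumr_ge0 => j _; rewrite -expr2 sqr_ge0. Qed.


Lemma sqfrob_eq0 p q (A : 'M[R]_(p, q)) : sqfrob A = 0 -> A = 0.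
Proof.
move/eqP; rewrite psumr_eq0 => [/allP nullA|i _]; last first.
  by apply: sumr_ge0 => j _; rewrite -expr2 sqr_ge0.
apply/matrixP => i j; rewrite mxE; move: (nullA i (mem_index_enum _)).
rewrite psumr_eq0 => [/allP /(_ j (mem_index_enum _))|k _]; last by rewrite -expr2 sqr_ge0.
by rewrite mulf_eq0 orbb => /eqP.
Qed.

Lemma frob_sqr p q (A : 'M[R]_(p, q)) : frob A ^+ 2 = sqfrob A.
Proof.
rewrite sqr_sqrtr; last by apply: sumr_ge0 => i _; apply: sumr_ge0 => j _; rewrite sqr_ge0.
by apply: eq_bigr => i _; apply: eq_bigr => j _; rewrite expr2.
Qed.

Lemma sqfrob0 p q : sqfrob (0 : 'M[R]_(p, q)) = 0.
Proof. exact: linear0. Qed.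

Lemma sqfrobD p q (A B : 'M[R]_(p, q)) :
  sqfrob (A + B) = sqfrob A + 2 * frob_inner A B + sqfrob B.
Proof. by rewrite /sqfrob frob_innerDl !linearD /= (frob_innerC B); ring. Qed.

Lemma sqfrobB p q (A B : 'M[R]_(p, q)) :
  sqfrob (A - B) = sqfrob A - 2 * frob_inner A B + sqfrob B.
Proof. by rewrite /sqfrob frob_innerBl !linearB /= (frob_innerC B); ring. Qed.

Lemma sqfrobZ p q a (A : 'M[R]_(p, q)) : sqfrob (a *: A) = a ^+ 2 * sqfrob A.
Proof. by rewrite /sqfrob frob_innerZl linearZ /= mulrA -expr2. Qed.

Lemma sqfrob_trmx p q (A : 'M[R]_(p, q)) : sqfrob A^T = sqfrob A.
Proof. exact: frob_inner_trmx. Qed.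

Lemma frob_inner_young p q a (A B : 'M[R]_(p, q)) : 0 < a ->
  `|frob_inner A B| <= a * sqfrob A + sqfrob B / (4 * a).
Proof.
move=> a_gt0.
have -> : a * sqfrob A + sqfrob B / (4 * a) = ((2 * a) ^+ 2 * sqfrob A + sqfrob B) / (4 * a).
  by field; rewrite gt_eqF.
rewrite ler_pdivlMr ?mulr_gt0 //.
have := sqfrob_ge0 ((2 * a) *: A - B); have := sqfrob_ge0 ((2 * a) *: A + B).
rewrite sqfrobB sqfrobD !sqfrobZ !frob_innerZl.
have [x_ge0|x_lt0] := lerP 0 (frob_inner A B); [rewrite ger0_norm | rewrite ltr0_norm] => //; nra.
Qed.

Lemma frob_inner_sqr_le p q (A B : 'M[R]_(p, q)) :
  frob_inner A B ^+ 2 <= sqfrob A * sqfrob B.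
Proof.
have [B0|B_neq0] := eqVneq (sqfrob B) 0.
  by rewrite B0 mulr0 (sqfrob_eq0 B0) linear0 expr0n.
have B_gt0 : 0 < sqfrob B by rewrite lt_def B_neq0 sqfrob_ge0.
have := sqfrob_ge0 (A - (frob_inner A B / sqfrob B) *: B).
rewrite sqfrobB sqfrobZ [frob_inner A _]frob_innerC frob_innerZl (frob_innerC B) -ler_pdivrMr //.
suff -> : sqfrob A - 2 * (frob_inner A B / sqfrob B * frob_inner A B)
   + (frob_inner A B / sqfrob B) ^+ 2 * sqfrob B = sqfrob A - frob_inner A B ^+ 2 / sqfrob B.
  by rewrite subr_ge0.
by field.
Qed.

Lemma sqfrob_mulmx_le p q s (A : 'M[R]_(p, q)) (B : 'M[R]_(q, s)) :
  sqfrob (A *m B) <= sqfrob A * sqfrob B.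
Proof.
have entryAB i j : (A *m B) i j = frob_inner (row i A) (col j B)^T.
  by rewrite mxE /frob_inner big_ord1; apply: eq_bigr => k _; rewrite !mxE.
have sumA : sqfrob A = \sum_i sqfrob (row i A).
  by apply: eq_bigr => i _; rewrite /sqfrob /frob_inner big_ord1; apply: eq_bigr => k _; rewrite !mxE.
have sumB : sqfrob B = \sum_j sqfrob (col j B)^T.
  rewrite /sqfrob /frob_inner exchange_big; apply: eq_bigr => j _.
  by rewrite big_ord1; apply: eq_bigr => k _; rewrite !mxE.
rewrite sumA sumB mulr_suml {1}/sqfrob /frob_inner.
apply: ler_sum => i _; rewrite mulr_sumr; apply: ler_sum => j _.
by rewrite -expr2 entryAB frob_inner_sqr_le.
Qed.

Lemma sqr_entry_le_sqfrob p q (A : 'M[R]_(p, q)) i j : A i j ^+ 2 <= sqfrob A.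
Proof.
rewrite /sqfrob /frob_inner (bigD1 i) //= (bigD1 j) //= -addrA expr2 lerDl.
by apply: addr_ge0; apply: sumr_ge0 => *; rewrite ?sumr_ge0 // => *; rewrite -expr2 sqr_ge0.
Qed.

Lemma l1norm_ge0 p q (A : 'M[R]_(p, q)) : 0 <= l1norm A.
Proof. by apply: sumr_ge0 => i _; apply: sumr_ge0. Qed.

Lemma normr_entry_le_l1norm p q (A : 'M[R]_(p, q)) i j : `|A i j| <= l1norm A.
Proof.
rewrite /l1norm (bigD1 i) //= (bigD1 j) //= -addrA lerDl.
by apply: addr_ge0; apply: sumr_ge0 => *; rewrite ?sumr_ge0.
Qed.

Lemma l1norm_midpoint p q (A B : 'M[R]_(p, q)) :
  2 * l1norm (2^-1 *: (A + B)) <= l1norm A + l1norm B.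
Proof.
rewrite /l1norm -big_split mulr_sumr; apply: ler_sum => i _.
rewrite -big_split mulr_sumr; apply: ler_sum => j _ /=.
by rewrite !mxE normrM ger0_norm // mulrA divff // mul1r ler_normD.
Qed.

End FrobeniusInner.

Section Continuity.
Variables (R : realType) (T : topologicalType).

Lemma sum_continuous (I : finType) (f : I -> T -> R) :
  (forall i, continuous (f i)) -> continuous (fun x => \sum_i f i x).
Proof. by move=> f_cont; apply: (continuous_big add_continuous) => i _. Qed.

Lemma sqfrob_comp_continuous p q (F : T -> 'M[R]_(p, q)) :
  (forall i j, continuous (fun x => F x i j)) -> continuous (fun x => sqfrob (F x)).
Proof.
move=> F_cont; apply: sum_continuous => i; apply: sum_continuous => j x.
by apply: cvgM; apply: F_cont.
Qed.

Lemma l1norm_comp_continuous p q (F : T -> 'M[R]_(p, q)) :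
  (forall i j, continuous (fun x => F x i j)) -> continuous (fun x => l1norm (F x)).
Proof.
move=> F_cont; apply: sum_continuous => i; apply: sum_continuous => j x.
exact/(continuous_comp (F_cont i j x))/norm_continuous.
Qed.

End Continuity.

Lemma rV_continuous_attains_min (R : realType) N (phi : 'rV[R]_N -> R) w0 (B : R) :
  continuous phi -> (forall w, phi w <= phi w0 -> forall k, `|w ord0 k| <= B) ->
  exists w, forall w', phi w <= phi w'.
Proof.
move=> phi_cont bounded.
pose K := [set w : 'rV[R]_N | forall k, `[- B, B]%classic (w ord0 k)]%classic.
have inK w : phi w <= phi w0 -> K w.
  by move=> /bounded wB k; rewrite /= in_itv /= -ler_norml.
have K_compact : compact K.
  by apply: (@rV_compact _ _ (fun=> `[- B, B]%classic)) => _; exact: segment_compact.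
have K_ne : (K !=set0)%classic by exists w0; apply: inK.
have [c _ c_min] := compact_EVT_min K_ne K_compact (continuous_subspaceT phi_cont).
exists c => w; have [/inK Kw|w0_lt] := lerP (phi w) (phi w0); first exact/c_min/mem_set.
exact/(le_trans (c_min _ (mem_set (inK _ (lexx _)))))/ltW.
Qed.

(* Compactness of coordinate boxes is available for row vectors, so pairs of
   matrices are flattened into a single row. *)
Section RowEncoding.
Variables (R : realType) (p1 q1 p2 q2 : nat).
Local Notation N := (p1 * q1 + p2 * q2)%N.

Definition rV_fst (w : 'rV[R]_N) : 'M[R]_(p1, q1) :=
  \matrix_(i, j) w ord0 (lshift _ (mxvec_index i j)).

Definition rV_snd (w : 'rV[R]_N) : 'M[R]_(p2, q2) :=
  \matrix_(i, j) w ord0 (rshift _ (mxvec_index i j)).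

Definition rV_pair (A : 'M[R]_(p1, q1)) (B : 'M[R]_(p2, q2)) : 'rV[R]_N :=
  row_mx (mxvec A) (mxvec B).

Lemma rV_fst_pair A B : rV_fst (rV_pair A B) = A.
Proof. by apply/matrixP => i j; rewrite mxE row_mxEl mxvecE. Qed.

Lemma rV_snd_pair A B : rV_snd (rV_pair A B) = B.
Proof. by apply/matrixP => i j; rewrite mxE row_mxEr mxvecE. Qed.

Lemma rV_fst_continuous i j : continuous (fun w => rV_fst w i j).
Proof. by under eq_fun do rewrite mxE; exact: coord_continuous. Qed.

Lemma rV_snd_continuous i j : continuous (fun w => rV_snd w i j).
Proof. by under eq_fun do rewrite mxE; exact: coord_continuous. Qed.

Lemma rV_entry_le w (B : R) :
  (forall i j, `|rV_fst w i j| <= B) -> (forall i j, `|rV_snd w i j| <= B) ->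
  forall k, `|w ord0 k| <= B.
Proof.
move=> fst_le snd_le k; rewrite -(splitK k).
case: (fintype.split k) => k'; case/mxvec_indexP: k' => i j /=.
  by move: (fst_le i j); rewrite mxE.
by move: (snd_le i j); rewrite mxE.
Qed.

End RowEncoding.

Section GradientCriterion.
Variables (R : realType) (p q : nat).

Lemma frob_inner_continuous (G : 'M[R]_(p, q)) : continuous (frob_inner G).
Proof.
apply: sum_continuous => i; apply: sum_continuous => j x.
by apply: continuousM; [exact: cst_continuous | exact: coord_continuous].
Qed.

Lemma sqfrob_le_mx_norm (H : 'M[R]_(p, q)) : sqfrob H <= (p * q)%:R * `|H| ^+ 2.
Proof.
have entry_le i j : `|H i j| <= `|H|.
  rewrite [leRHS]/Num.norm /= mx_normrE.
  exact: (le_bigmax _ (fun ij : 'I_p * 'I_q => `|H ij.1 ij.2|) (i, j)).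
apply: (@le_trans _ _ (\sum_(i < p) \sum_(j < q) `|H| ^+ 2)).
  apply: ler_sum => i _; apply: ler_sum => j _.
  by rewrite -expr2 -real_normK ?num_real // lerXn2r ?nnegrE.
by rewrite !sumr_const !card_ord -mulrnA mulr_natl mulnC.
Qed.

Lemma is_gradient_of_sqfrob_remainder (f : 'M[R]_(p, q) -> R) (U G : 'M[R]_(p, q)) (K : R) :
  0 <= K ->
  (forall H, `|H| <= 1 -> `|f (U + H) - f U - frob_inner G H| <= K * sqfrob H) ->
  is_gradient f U G.
Proof.
move=> K_ge0 remainder_le.
have f_expand : f \o shift U = cst (f U) + frob_inner G +o_ (0 : 'M[R]_(p, q)) id.
  apply/eqaddoP => eps eps_gt0 /=.
  pose C := K * (p * q)%:R + 1.
  have C_gt0 : 0 < C by rewrite ltr_pwDr // mulr_ge0.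
  have d_gt0 : 0 < Num.min 1 (eps / C) by rewrite lt_min ltr01 divr_gt0.
  apply: filterS (nbhs0_le d_gt0) => H; rewrite le_min => /andP[H_le1 H_le].
  rewrite -[X in `|X|]/(f (H + U) - (f U + frob_inner G H)) [H + U]addrC opprD addrA.
  apply: le_trans (remainder_le _ H_le1) _.
  apply: le_trans (ler_wpM2l K_ge0 (sqfrob_le_mx_norm H)) _.
  rewrite ler_pdivlMr // in H_le; have := normr_ge0 H.
  have : 0 <= (p * q)%:R :> R by [].
  rewrite /C in H_le; nra.
have dfE : 'd f U = frob_inner G :> (_ -> _).
  by apply: diff_unique; [exact: frob_inner_continuous | exact: f_expand].
split; last by move=> H; rewrite dfE.
by apply/diff_locallyP; rewrite dfE; split; [exact: frob_inner_continuous | exact: f_expand].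
Qed.

End GradientCriterion.

Section Objective.
Variables (R : realType) (m n ni r : nat) (rho lam : R) (M : 'M[R]_(m, ni)).
Hypotheses (rho_gt0 : 0 < rho) (lam_gt0 : 0 < lam).
Implicit Types (U H : 'M[R]_(m, r)) (V : 'M[R]_(ni, r)) (S : 'M[R]_(m, ni)).

Local Notation L := (@Lobj R m n ni r rho lam M).
Local Notation is_min := (@is_minimizer R m n ni r rho lam M).
Local Notation g := (@gfun R m n ni r rho lam M).

Definition residual U V S := U *m V^T + S - M.

Definition Uweight : R := ni%:R / n%:R.

Definition gradU U V S := residual U V S *m V + (rho * Uweight) *: U.

Lemma Uweight_ge0 : 0 <= Uweight.
Proof. exact: divr_ge0. Qed.

Lemma LobjE U V S : L U V S =
  2^-1 * sqfrob (residual U V S) + rho / 2 * (sqfrob V + Uweight * sqfrob U)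
  + lam * l1norm S.
Proof. by rewrite /Lobj !frob_sqr. Qed.

Lemma Lobj_shiftU U H V S : L (U + H) V S =
  L U V S + frob_inner (gradU U V S) H + 2^-1 * sqfrob (H *m V^T)
  + rho * Uweight / 2 * sqfrob H.
Proof.
rewrite !LobjE; have -> : residual (U + H) V S = residual U V S + H *m V^T.
  rewrite /residual mulmxDl; move: (U *m V^T) (H *m V^T) => P Q.
  by rewrite -!addrA; congr (_ + _); rewrite addrC -addrA.
rewrite (sqfrobD (residual U V S)) (sqfrobD U H) /gradU.
by rewrite (frob_innerDl (residual U V S *m V)) frob_innerZl frob_inner_mulmxr; field.
Qed.

Lemma Lobj_shiftU_remainder U H V S :
  0 <= L (U + H) V S - L U V S - frob_inner (gradU U V S) H
    <= (sqfrob V / 2 + rho * Uweight / 2) * sqfrob H.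
Proof.
rewrite Lobj_shiftU.
have HV_le : sqfrob (H *m V^T) <= sqfrob H * sqfrob V.
  by rewrite -(sqfrob_trmx V) sqfrob_mulmx_le.
have HV_ge0 := sqfrob_ge0 (H *m V^T).
have H_ge0 := mulr_ge0 (mulr_ge0 (ltW rho_gt0) Uweight_ge0) (sqfrob_ge0 H).
by apply/andP; split; lra.
Qed.

Lemma Lobj_midpoint U V1 S1 V2 S2 :
  4^-1 * sqfrob (residual U V1 S1 - residual U V2 S2) + rho / 4 * sqfrob (V1 - V2)
  <= L U V1 S1 + L U V2 S2 - 2 * L U (2^-1 *: (V1 + V2)) (2^-1 *: (S1 + S2)).
Proof.
rewrite !LobjE; have -> : residual U (2^-1 *: (V1 + V2)) (2^-1 *: (S1 + S2)) =
                          2^-1 *: (residual U V1 S1 + residual U V2 S2).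
  rewrite /residual linearZ /= -scalemxAr linearD /= mulmxDr.
  by apply/matrixP => i j; rewrite !mxE; field.
rewrite !sqfrobZ (sqfrobB (residual U V1 S1)) (sqfrobD (residual U V1 S1)).
rewrite (sqfrobB V1) (sqfrobD V1).
have := l1norm_midpoint S1 S2; have := ltW lam_gt0; nra.
Qed.

Let rho_half_ge0 : 0 <= rho / 2.
Proof. exact: divr_ge0 (ltW rho_gt0) (ler0n _ 2). Qed.

Lemma Lobj_ge_sqfrobV U V S : rho / 2 * sqfrob V <= L U V S.
Proof.
rewrite LobjE mulrDr; have := sqfrob_ge0 (residual U V S).
have := mulr_ge0 rho_half_ge0 (mulr_ge0 Uweight_ge0 (sqfrob_ge0 U)).
have := mulr_ge0 (ltW lam_gt0) (l1norm_ge0 S).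
lra.
Qed.

Lemma Lobj_ge_l1norm U V S : lam * l1norm S <= L U V S.
Proof.
rewrite LobjE; have := sqfrob_ge0 (residual U V S).
have := mulr_ge0 rho_half_ge0
  (addr_ge0 (sqfrob_ge0 V) (mulr_ge0 Uweight_ge0 (sqfrob_ge0 U))).
lra.
Qed.

Lemma Lobj_ge0 U V S : 0 <= L U V S.
Proof. exact: le_trans (mulr_ge0 (ltW lam_gt0) (l1norm_ge0 S)) (Lobj_ge_l1norm U V S). Qed.

Lemma Lobj_quadratic_growth U Vs Ss V S : is_min U Vs Ss ->
  4^-1 * sqfrob (residual U V S - residual U Vs Ss) + rho / 4 * sqfrob (V - Vs)
  <= L U V S - L U Vs Ss.
Proof.
move=> /(_ (2^-1 *: (V + Vs)) (2^-1 *: (S + Ss))) min_le.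
have := Lobj_midpoint U V S Vs Ss; lra.
Qed.

Lemma minimizer_uniq U V1 S1 V2 S2 : is_min U V1 S1 -> is_min U V2 S2 -> V1 = V2 /\ S1 = S2.
Proof.
move=> min1 min2; have growth := Lobj_quadratic_growth V1 S1 min2.
have L_le := min1 V2 S2; have rho4_gt0 : 0 < rho / 4 by rewrite divr_gt0.
have dR_ge0 := sqfrob_ge0 (residual U V1 S1 - residual U V2 S2).
have dV_ge0 := sqfrob_ge0 (V1 - V2).
have dV0 : sqfrob (V1 - V2) = 0.
  by apply/le_anti; rewrite dV_ge0 andbT -(pmulr_rle0 _ rho4_gt0); lra.
have eqV : V1 = V2 by apply/subr0_eq/sqfrob_eq0.
subst V2; split => //; apply/subr0_eq/sqfrob_eq0.
have -> : S1 - S2 = residual U V1 S1 - residual U V1 S2.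
  by apply/matrixP => i j; rewrite !mxE; ring.
by apply/le_anti; rewrite dR_ge0 andbT; lra.
Qed.

Lemma Lobj_comp_continuous (T : topologicalType) U
    (FV : T -> 'M[R]_(ni, r)) (FS : T -> 'M[R]_(m, ni)) :
  (forall i j, continuous (fun x => FV x i j)) ->
  (forall i j, continuous (fun x => FS x i j)) ->
  continuous (fun x => L U (FV x) (FS x)).
Proof.
move=> FV_cont FS_cont; under eq_fun do rewrite LobjE.
have residual_cont i j : continuous (fun x => residual U (FV x) (FS x) i j).
  have -> : (fun x => residual U (FV x) (FS x) i j) =
            (fun x => \sum_k U i k * FV x j k + FS x i j - M i j).
    by apply/funext => x; rewrite !mxE; congr (_ + _ + _); apply: eq_bigr => k _; rewrite mxE.
  move=> x; apply: cvgD; [apply: cvgD|]; last exact: cvg_cst.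
    by apply: sum_continuous => k y; apply: cvgM; [exact: cvg_cst | exact: FV_cont].
  exact: FS_cont.
move=> x; apply: cvgD; [apply: cvgD|]; apply: cvgM; try exact: cvg_cst.
- exact: sqfrob_comp_continuous residual_cont x.
- by apply: cvgD; [exact: sqfrob_comp_continuous FV_cont x | exact: cvg_cst].
- exact: l1norm_comp_continuous FS_cont x.
Qed.

Lemma exists_minimizer U : exists VS : 'M[R]_(ni, r) * 'M[R]_(m, ni), is_min U VS.1 VS.2.
Proof.
pose phi w := L U (rV_fst w) (rV_snd w); pose L0 := L U 0 0.
have phi0 : phi (rV_pair 0 0) = L0 by rewrite /phi rV_fst_pair rV_snd_pair.
have phi_cont : continuous phi.
  exact: Lobj_comp_continuous (@rV_fst_continuous _ _ _ _ _) (@rV_snd_continuous _ _ _ _ _).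
have L0_ge0 : 0 <= L0 := Lobj_ge0 U 0 0.
have L0rho_ge0 : 0 <= 2 * L0 / rho := divr_ge0 (mulr_ge0 (ler0n _ 2) L0_ge0) (ltW rho_gt0).
have L0lam_ge0 : 0 <= L0 / lam := divr_ge0 L0_ge0 (ltW lam_gt0).
have [|w w_min] := @rV_continuous_attains_min _ _ phi (rV_pair 0 0)
    (1 + 2 * L0 / rho + L0 / lam) phi_cont.
  move=> w; rewrite phi0 /phi => phi_le; apply: rV_entry_le => i j.
    have sqfrob_le : sqfrob (rV_fst w) <= 2 * L0 / rho.
      by rewrite ler_pdivlMr //; have := Lobj_ge_sqfrobV U (rV_fst w) (rV_snd w); lra.
    have := sqr_entry_le_sqfrob (rV_fst w) i j; set x := rV_fst w i j.
    by have [x_ge0|x_lt0] := lerP 0 x; [rewrite ger0_norm | rewrite ltr0_norm]; nra.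
  have l1norm_le : l1norm (rV_snd w) <= L0 / lam.
    by rewrite ler_pdivlMr // mulrC; have := Lobj_ge_l1norm U (rV_fst w) (rV_snd w); lra.
  by have := normr_entry_le_l1norm (rV_snd w) i j; lra.
exists (rV_fst w, rV_snd w) => V S /=.
by have := w_min (rV_pair V S); rewrite /phi rV_fst_pair rV_snd_pair.
Qed.

Lemma gfun_le_Lobj U V S : g U <= L U V S.
Proof.
apply: ge_inf; last by exists (V, S).
by exists 0 => _ [[V' S'] _ <-]; exact: Lobj_ge0.
Qed.

Lemma gfun_minimizer U V S : is_min U V S -> g U = L U V S.
Proof.
move=> min; apply/le_anti; rewrite gfun_le_Lobj /=.
apply: lb_le_inf; first by exists (L U V S), (V, S).
by move=> _ [[V' S'] _ <-]; exact: min.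
Qed.

Lemma minimizer_near_bounded U : exists2 C, 0 <= C &
  forall H V S, `|H| <= 1 -> is_min (U + H) V S -> sqfrob V <= C.
Proof.
pose K := 2^-1 + rho * Uweight / 2; pose mr : R := (m * r)%:R.
pose X := L U 0 0 + sqfrob (gradU U 0 0) / 2 + K * mr.
have K_ge0 : 0 <= K by rewrite /K; have := mulr_ge0 (ltW rho_gt0) Uweight_ge0; lra.
have X_ge0 : 0 <= X := addr_ge0
  (addr_ge0 (Lobj_ge0 U 0 0) (divr_ge0 (sqfrob_ge0 _) (ler0n _ 2))) (mulr_ge0 K_ge0 (ler0n _ _)).
exists (2 * X / rho) => [|H V S H_le1 min].
  exact: divr_ge0 (mulr_ge0 (ler0n _ 2) X_ge0) (ltW rho_gt0).
have sqfrobH_le : sqfrob H <= mr.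
  apply: le_trans (sqfrob_le_mx_norm H) _; rewrite ler_piMr // exprn_ile1 //.
have /andP[_ rem] := Lobj_shiftU_remainder U H 0 0; rewrite sqfrob0 mul0r add0r in rem.
have := sqfrob_ge0 (gradU U 0 0 - H); rewrite sqfrobB.
have := ler_wpM2l K_ge0 sqfrobH_le; have := Lobj_ge_sqfrobV (U + H) V S.
have := min 0 0; rewrite ler_pdivlMr // /X /K; lra.
Qed.

Lemma is_gradient_Lobj U V S : is_gradient (fun U' => L U' V S) U (gradU U V S).
Proof.
have K_ge0 : 0 <= sqfrob V / 2 + rho * Uweight / 2.
  by have := sqfrob_ge0 V; have := mulr_ge0 (ltW rho_gt0) Uweight_ge0; lra.
apply: (is_gradient_of_sqfrob_remainder K_ge0) => H _.
by have /andP[rem_ge0 rem_le] := Lobj_shiftU_remainder U H V S; rewrite ger0_norm.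
Qed.

Lemma frob_inner_gradU_sub U V S V0 S0 H :
  frob_inner (gradU U V S) H - frob_inner (gradU U V0 S0) H =
  frob_inner (residual U V S - residual U V0 S0) (H *m V^T)
  + frob_inner (V - V0) ((residual U V0 S0)^T *m H).
Proof.
rewrite -frob_inner_mulmxr -frob_inner_mulmxl -frob_innerDl -frob_innerBl /gradU.
by rewrite (mulmxBl (residual U V S)) mulmxBr opprD addrACA subrr addr0 addrA subrK.
Qed.

Lemma gfun_shift_upper U Vs Ss H : is_min U Vs Ss ->
  g (U + H) - g U - frob_inner (gradU U Vs Ss) H
  <= (sqfrob Vs / 2 + rho * Uweight / 2) * sqfrob H.
Proof.
move=> min; rewrite (gfun_minimizer min).
have /andP[_ rem_le] := Lobj_shiftU_remainder U H Vs Ss.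
by have := gfun_le_Lobj (U + H) Vs Ss; lra.
Qed.

Lemma gfun_shift_lower U Vs Ss : is_min U Vs Ss -> exists2 K, 0 <= K &
  forall H, `|H| <= 1 -> - (K * sqfrob H) <= g (U + H) - g U - frob_inner (gradU U Vs Ss) H.
Proof.
(* Young's inequality with weights 1/4 and rho/4 uses up exactly the quadratic
   growth of L U around (Vs, Ss). *)
move=> min; have [C C_ge0 C_bound] := minimizer_near_bounded U.
set Rs := residual U Vs Ss.
exists (C + sqfrob Rs / rho) => [|H H_le1].
  exact: addr_ge0 C_ge0 (divr_ge0 (sqfrob_ge0 _) (ltW rho_gt0)).
have [[V S] /= minH] := exists_minimizer (U + H).
rewrite (gfun_minimizer minH) (gfun_minimizer min).
have /andP[rem_ge0 _] := Lobj_shiftU_remainder U H V S.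
have growth := Lobj_quadratic_growth V S min.
have grad_sub := frob_inner_gradU_sub U V S Vs Ss H.
have quarter_gt0 : 0 < 4^-1 :> R by rewrite invr_gt0.
have rho_quarter_gt0 : 0 < rho / 4 by rewrite divr_gt0.
have := frob_inner_young (residual U V S - Rs) (H *m V^T) quarter_gt0.
have := frob_inner_young (V - Vs) (Rs^T *m H) rho_quarter_gt0.
have -> : 4 * (rho / 4) = rho by field.
have -> : 4 * 4^-1 = 1 :> R by field.
rewrite !ler_norml divr1 => /andP[young1 _] /andP[young2 _].
have HV_le : sqfrob (H *m V^T) <= sqfrob H * C.
  by apply: le_trans (sqfrob_mulmx_le _ _) _; rewrite sqfrob_trmx ler_wpM2l ?sqfrob_ge0 ?(C_bound H V S).
have RsH_le : sqfrob (Rs^T *m H) / rho <= sqfrob Rs / rho * sqfrob H.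
  rewrite mulrAC ler_pM2r ?invr_gt0 //.
  by apply: le_trans (sqfrob_mulmx_le _ _) _; rewrite sqfrob_trmx.
lra.
Qed.

Lemma is_gradient_gfun U Vs Ss : is_min U Vs Ss -> is_gradient g U (gradU U Vs Ss).
Proof.
move=> min; have [K K_ge0 lower] := gfun_shift_lower min.
have K'_ge0 : 0 <= sqfrob Vs / 2 + rho * Uweight / 2.
  by have := sqfrob_ge0 Vs; have := mulr_ge0 (ltW rho_gt0) Uweight_ge0; lra.
apply: (is_gradient_of_sqfrob_remainder (addr_ge0 K_ge0 K'_ge0)) => H H_le1.
have := lower H H_le1; have := gfun_shift_upper H min.
have := mulr_ge0 K_ge0 (sqfrob_ge0 H); have := mulr_ge0 K'_ge0 (sqfrob_ge0 H).
by rewrite ler_norml; lra.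
Qed.

End Objective.

Theorem lemma2 (R : realType) (m n ni r : nat)
  (hm : (0 < m)%N) (hn : (0 < n)%N) (hni : (0 < ni)%N) (hr : (0 < r)%N)
  (hnin : (ni <= n)%N)
  (rho lam : R) (hrho : 0 < rho) (hlam : 0 < lam)
  (M : 'M[R]_(m, ni))
  (CU CV CS CM : R)
  (hM : frob M <= CM)
  (hminb : forall (U : 'M[R]_(m, r)) (V : 'M[R]_(ni, r)) (S : 'M[R]_(m, ni)),
      frob U <= CU -> @is_minimizer R m n ni r rho lam M U V S ->
      frob V <= CV /\ frob S <= CS)
  (U : 'M[R]_(m, r)) (hU : frob U <= CU) :
  (exists VS : 'M[R]_(ni, r) * 'M[R]_(m, ni),
      @is_minimizer R m n ni r rho lam M U VS.1 VS.2) /\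
  (forall (V1 V2 : 'M[R]_(ni, r)) (S1 S2 : 'M[R]_(m, ni)),
      @is_minimizer R m n ni r rho lam M U V1 S1 ->
      @is_minimizer R m n ni r rho lam M U V2 S2 -> V1 = V2 /\ S1 = S2) /\
  differentiable (@gfun R m n ni r rho lam M) U /\
  (forall (Vs : 'M[R]_(ni, r)) (Ss : 'M[R]_(m, ni)),
      @is_minimizer R m n ni r rho lam M U Vs Ss ->
      exists G : 'M[R]_(m, r),
        is_gradient (@gfun R m n ni r rho lam M) U G /\
        is_gradient (fun U' => @Lobj R m n ni r rho lam M U' Vs Ss) U G).
Proof.
have [[V0 S0] /= min0] := exists_minimizer n M hrho hlam U.
split; first by exists (V0, S0).
split; first by move=> V1 V2 S1 S2; exact: minimizer_uniq.
split; first by have [] := is_gradient_gfun hrho hlam min0.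
move=> Vs Ss min; exists (gradU n rho M U Vs Ss).
by split; [exact: is_gradient_gfun | exact: is_gradient_Lobj].
Qed.
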